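(* Let $\alpha,\beta$ be sets, $z\in\beta$, $\mathit{seq}:\beta\times\alpha\to\beta$ and $\mathit{comb}:\beta\times\beta\to\beta$, written $x\oplus y$. Let $\Gamma=\{\mathrm{foldl}(\mathit{seq},z,L) : L \text{ a finite list over }\alpha\}$. If calls $\mathrm{aggregate}(z,\mathit{seq},\mathit{comb},\mathit{rdd})$ have deterministic outcomes, then: (1) $z$ is an identity of $\oplus$ on $\Gamma$; (2) $\oplus$ is closed on $\Gamma$ (i.e. $x\oplus y\in\Gamma$ for $x,y\in\Gamma$); (3) $\oplus$ is commutative on $\Gamma$; (4) $\oplus$ is associative on $\Gamma$.
   Context: Lists are finite; $\mathbin{+\!\!+}$ is concatenation. $\mathrm{foldl}(f,b,[\,])=b$, $\mathrm{foldl}(f,b,[x_1,\dots,x_n])=f(\cdots f(f(b,x_1),x_2)\cdots,x_n)$. An RDD is a list of lists. A partitioning is a function $P$ sending each list $L$ over $\alpha$ to an RDD obtained by splitting $L$ into consecutive (possibly empty) pieces $p_1,\dots,p_n$ with $p_1\mathbin{+\!\!+}\cdots\mathbin{+\!\!+}p_n=L$ and then arbitrarily permuting $[p_1,\dots,p_n]$. $\mathrm{aggregate}_{\mathrm{det}}(z,\mathit{seq},\mathit{comb},[q_1,\dots,q_m])=\mathrm{foldl}(\mathit{comb},z,[\mathrm{foldl}(\mathit{seq},z,q_1),\dots,\mathrm{foldl}(\mathit{seq},z,q_m)])$. Calls $\mathrm{aggregate}(z,\mathit{seq},\mathit{comb},\mathit{rdd})$ have deterministic outcomes if $\mathrm{aggregate}_{\mathrm{det}}(z,\mathit{seq},\mathit{comb},P(L))=\mathrm{foldl}(\mathit{seq},z,L)$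 for all lists $L$ over $\alpha$ and all partitionings $P$. *)

From Stdlib Require Import List Permutation.
Import ListNotations.

Definition foldl {A B : Type} (f : B -> A -> B) (b : B) (l : list A) : B :=
  fold_left f l b.

Definition RDD (A : Type) := list (list A).

Definition is_partitioning {A : Type} (P : list A -> RDD A) : Prop :=
  forall L : list A, exists ps : list (list A),
    concat ps = L /\ Permutation ps (P L).

Definition aggregate_det {A B : Type} (z : B) (sq : B -> A -> B)
  (comb : B -> B -> B) (rdd : RDD A) : B :=
  foldl comb z (map (fun q => foldl sq z q) rdd).

Definition deterministic_aggregate {A B : Type} (z : B) (sq : B -> A -> B)
  (comb : B -> B -> B) : Prop :=
  forall P : list A -> RDD A, is_partitioning P ->
    forall L : list A, aggregate_det z sq comb (P L) = foldl sq z L.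

Definition Gamma {A B : Type} (z : B) (sq : B -> A -> B) (x : B) : Prop :=
  exists L : list A, x = foldl sq z L.

From Stdlib Require Import List Permutation PeanoNat.
Import ListNotations.

(* Any split of a list into consecutive pieces, rearranged by a fixed
   permutation of the pieces, is produced by some partitioning: cut every list
   at the same piece lengths.  Determinism applied to the single piece [[L]]
   makes [z] a left identity, and then applied to [[L1; L2]] and [[L2; L1]]
   gives [comb (foldl sq z L1) (foldl sq z L2) = foldl sq z (L1 ++ L2)] and
   its commuted form; the remaining laws are inherited from [++]. *)

Fixpoint split_lengths {A : Type} (ns : list nat) (L : list A) : list (list A) :=
  match ns with
  | [] => [L]
  | n :: ns' => firstn n L :: split_lengths ns' (skipn n L)
  end.

Lemma concat_split_lengths {A : Type} (ns : list nat) (L : list A) :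
  concat (split_lengths ns L) = L.
Proof.
  revert L; induction ns as [|n ns IH]; intros L; simpl.
  - apply app_nil_r.
  - rewrite IH. apply firstn_skipn.
Qed.

Lemma split_lengths_concat {A : Type} (ps : list (list A)) (q : list A) :
  split_lengths (map (@length A) ps) (concat ps ++ q) = ps ++ [q].
Proof.
  induction ps as [|p ps IH]; [reflexivity|]; cbn [map concat split_lengths].
  rewrite <- app_assoc, firstn_app, skipn_app, Nat.sub_diag, firstn_all,
    skipn_all, firstn_O, skipn_O, app_nil_l, app_nil_r, IH.
  reflexivity.
Qed.

Lemma is_partitioning_split_lengths {A : Type}
    (f : list (list A) -> list (list A)) (ns : list nat) :
  (forall r, Permutation r (f r)) ->
  is_partitioning (fun L => f (split_lengths ns L)).
Proof.
  intros Hf L. exists (split_lengths ns L).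
  split; [apply concat_split_lengths | apply Hf].
Qed.

Section DeterministicAggregate.

Variables (A B : Type) (z : B) (sq : B -> A -> B) (comb : B -> B -> B).
Hypothesis Hdet : deterministic_aggregate z sq comb.

Lemma aggregate_det_permuted_pieces (f : list (list A) -> list (list A))
    (ps : list (list A)) (q : list A) :
  (forall r, Permutation r (f r)) ->
  aggregate_det z sq comb (f (ps ++ [q])) = foldl sq z (concat ps ++ q).
Proof.
  intros Hf.
  rewrite <- (split_lengths_concat ps q).
  exact (Hdet _ (is_partitioning_split_lengths f (map (@length A) ps) Hf) _).
Qed.

Lemma comb_z_foldl (L : list A) : comb z (foldl sq z L) = foldl sq z L.
Proof.
  exact (aggregate_det_permuted_pieces id [] L (@Permutation_refl _)).
Qed.

Lemma comb_foldl (L1 L2 : list A) :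
  comb (foldl sq z L1) (foldl sq z L2) = foldl sq z (L1 ++ L2).
Proof.
  rewrite <- comb_z_foldl at 1.
  replace (L1 ++ L2) with (concat [L1] ++ L2) by (simpl; now rewrite app_nil_r).
  exact (aggregate_det_permuted_pieces id [L1] L2 (@Permutation_refl _)).
Qed.

Lemma comb_foldl_swap (L1 L2 : list A) :
  comb (foldl sq z L2) (foldl sq z L1) = foldl sq z (L1 ++ L2).
Proof.
  rewrite <- comb_z_foldl at 1.
  replace (L1 ++ L2) with (concat [L1] ++ L2) by (simpl; now rewrite app_nil_r).
  exact (aggregate_det_permuted_pieces (@rev _) [L1] L2 (@Permutation_rev _)).
Qed.

Lemma comb_foldl_z (L : list A) : comb (foldl sq z L) z = foldl sq z L.
Proof. rewrite <- (app_nil_r L) at 2. exact (comb_foldl L []). Qed.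

End DeterministicAggregate.

Theorem lemma5 (A B : Type) (z : B) (sq : B -> A -> B) (comb : B -> B -> B) :
  deterministic_aggregate z sq comb ->
  (forall x, Gamma z sq x -> comb z x = x /\ comb x z = x) /\
  (forall x y, Gamma z sq x -> Gamma z sq y -> Gamma z sq (comb x y)) /\
  (forall x y, Gamma z sq x -> Gamma z sq y -> comb x y = comb y x) /\
  (forall x y w, Gamma z sq x -> Gamma z sq y -> Gamma z sq w ->
     comb (comb x y) w = comb x (comb y w)).
Proof.
  intros Hdet; split; [|split; [|split]].
  - intros x [L ->].
    split; [apply comb_z_foldl | apply comb_foldl_z]; exact Hdet.
  - intros x y [L1 ->] [L2 ->].
    exists (L1 ++ L2). apply comb_foldl, Hdet.
  - intros x y [L1 ->] [L2 ->].
    rewrite comb_foldl, comb_foldl_swap by exact Hdet. reflexivity.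
  - intros x y w [L1 ->] [L2 ->] [L3 ->].
    rewrite !comb_foldl, app_assoc by exact Hdet. reflexivity.
Qed.
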